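(* Let $S_1,\ldots,S_m$ be propositional formulae. The lexicographic orders $[S_1,\ldots,S_{m-1},S_m]$ and $[S_1,\ldots,S_{m-1}]$ are equivalent if and only if either $Q \models S_m$ or $Q \models \neg S_m$ holds for every formula $Q = (B_1 \equiv S_1) \wedge \cdots \wedge (B_{m-1} \equiv S_{m-1})$, where each $B_i$ is either $\top$ or $\bot$.
   Context: Models are truth assignments. For a formula $F$: $I \leq_F J$ iff $I \models F$ or $J \not\models F$. For a sequence $S=[S_1,\ldots,S_m]$: $I \leq_S J$ iff either $S=[]$, or ($I \leq_{S_1} J$ and (either $J \not\leq_{S_1} I$ or $I \leq_R J$)), where $R=[S_2,\ldots,S_m]$. Two sequences $S$ and $R$ are equivalent if $I \leq_S J$ and $I\leq_R J$ coincide for all pairs of models $I,J$. *)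

From mathcomp Require Import all_boot.
Set Implicit Arguments. Unset Strict Implicit. Unset Printing Implicit Defensive.

Inductive form : Type :=
  | FVar of nat
  | FTop
  | FBot
  | FNeg of form
  | FAnd of form & form
  | FOr of form & form
  | FImp of form & form
  | FEqv of form & form.

Definition model := nat -> bool.

Fixpoint eval (I : model) (F : form) : bool :=
  match F with
  | FVar v => I v
  | FTop => true
  | FBot => false
  | FNeg G => ~~ eval I G
  | FAnd G H => eval I G && eval I H
  | FOr G H => eval I G || eval I H
  | FImp G H => eval I G ==> eval I H
  | FEqv G H => eval I G == eval I H
  end.

Definition entails (Q F : form) : Prop := forall I : model, eval I Q -> eval I F.

Definition le_form (F : form) (I J : model) : bool := eval I F || ~~ eval J F.

Fixpoint le_seq (S : seq form) (I J : model) : bool :=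
  match S with
  | [::] => true
  | F :: R => le_form F I J && (~~ le_form F J I || le_seq R I J)
  end.

Definition seq_equiv (S R : seq form) : Prop :=
  forall I J : model, le_seq S I J = le_seq R I J.

Definition bconst (b : bool) : form := if b then FTop else FBot.

Fixpoint big_and (l : seq form) : form :=
  match l with
  | [::] => FTop
  | [:: F] => F
  | F :: l' => FAnd F (big_and l')
  end.

Definition Qform (bs : seq bool) (S : seq form) : form :=
  big_and [seq FEqv (bconst p.1) p.2 | p <- zip bs S].

(* Appending S_m to [S_1, ..., S_(m-1)] only matters when comparing two models with
   the same truth values on S_1, ..., S_(m-1), and then [<=_(S_m)] must hold both ways,
   i.e. S_m must take the same value on the two models. The formulae Q are exactly the
   characteristic formulae of these classes of models, and S_m is constant on the
   models of Q iff Q entails S_m or its negation. *)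
From mathcomp Require Import all_boot.
From Stdlib Require Import Classical_Prop.

Definition profile (S : seq form) (I : model) : seq bool := map (eval I) S.

Lemma eval_big_and I l : eval I (big_and l) = all (eval I) l.
Proof.
elim: l => [|F [|G l] IH] //=; first by rewrite andbT.
by rewrite IH.
Qed.

Lemma eval_Qform I bs S : size bs = size S ->
  eval I (Qform bs S) = (profile S I == bs).
Proof.
rewrite /Qform eval_big_and.
elim: S bs => [|F S IH] [|b bs] //= [] size_bs.
by rewrite IH // eqseq_cons; case: b; case: (eval I F).
Qed.

Lemma le_seq_same_profile S I J : profile S I = profile S J -> le_seq S I J.
Proof.
elim: S => [|F S IH] //= [] eqF /IH ->.
by rewrite /le_form eqF; case: (eval J F).
Qed.

Lemma le_seq_rcons S F I J : le_seq (rcons S F) I J =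
  if profile S I == profile S J then le_form F I J else le_seq S I J.
Proof.
elim: S => [|G S IH] /=; first by rewrite /le_form; case: (eval I F); case: (eval J F).
by rewrite IH eqseq_cons /le_form; case: (eval I G); case: (eval J G).
Qed.

Lemma le_form_antisym F I J :
  le_form F I J -> le_form F J I -> eval I F = eval J F.
Proof. by rewrite /le_form; case: (eval I F); case: (eval J F). Qed.

Lemma seq_equiv_rconsP S F :
  seq_equiv (rcons S F) S <->
  (forall I J, profile S I = profile S J -> eval I F = eval J F).
Proof.
split=> [equivSF I J eqIJ | constF I J].
- have le_rcons K L : profile S K = profile S L -> le_form F K L.
    move=> eqKL; have := equivSF K L.
    by rewrite le_seq_rcons eqKL eqxx le_seq_same_profile.
  by apply: le_form_antisym; apply: le_rcons.
- rewrite le_seq_rcons; case: eqP => // eqIJ.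
  by rewrite le_seq_same_profile // /le_form (constF I J eqIJ) orbN.
Qed.

Lemma entails_or_entails_negP Q F :
  (forall I J, eval I Q -> eval J Q -> eval I F = eval J F) <->
  entails Q F \/ entails Q (FNeg F).
Proof.
split=> [constF | [QF | QnF] I J QI QJ].
- case: (classic (exists I, eval I Q && eval I F)) => [[I /andP[QI FI]] | noF].
  + by left=> J QJ; rewrite -(constF I J QI QJ).
  + right=> J QJ /=; apply/negP => FJ.
    by apply: noF; exists J; rewrite QJ FJ.
- by rewrite (QF I QI) (QF J QJ).
- by have /= /negbTE -> := QnF I QI; have /= /negbTE -> := QnF J QJ.
Qed.

Theorem theorem2 (S : seq form) (Sm : form) :
  seq_equiv (rcons S Sm) S <->
  (forall bs : seq bool, size bs = size S ->
     entails (Qform bs S) Sm \/ entails (Qform bs S) (FNeg Sm)).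
Proof.
rewrite seq_equiv_rconsP; split=> [constSm bs size_bs | entailsQ I J eqIJ].
- apply/entails_or_entails_negP => I J.
  rewrite !eval_Qform // => /eqP profI /eqP profJ.
  by apply: constSm; rewrite profI profJ.
- have size_prof : size (profile S I) = size S by rewrite size_map.
  move: (entailsQ _ size_prof) => /entails_or_entails_negP; apply.
  + by rewrite eval_Qform.
  + by rewrite eval_Qform // eqIJ.
Qed.
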